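(* Let $A$ be a real symmetric $n\times n$ matrix with symmetric tropical rank $r$. Choose a real number $M$ less than every entry of $A$ and a real number $P$ greater than every entry of $A$, and define the $(n+1)\times(n+1)$ matrix $$A'=\begin{pmatrix}A&\mathbf P\\ \mathbf P^{T}&M\end{pmatrix},$$ where $\mathbf P$ is the column vector of length $n$ with all entries $P$. Then $A'$ has symmetric tropical rank $r+1$.
   Context: For an $r\times r$ submatrix of a real symmetric matrix $A$ with row index set $I$ and column index set $J$, each bijection $\rho:I\to J$ gives a monomial $\prod_{i\in I}X_{i,\rho(i)}$ in commuting variables subject to $X_{i,j}=X_{j,i}$, with value $\sum_{i\in I}A_{i,\rho(i)}$; the submatrix is symmetrically tropically singular if the minimum value is attained by at least two distinct monomials. The symmetric tropical rank of $A$ is the largest $r$ such that $A$ has an $r\times r$ submatrix (arbitrary row and column sets) that is not symmetrically tropically singular. *)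

From mathcomp Require Import all_boot all_order all_algebra.
From mathcomp Require Import all_classical all_reals.
Set Implicit Arguments. Unset Strict Implicit. Unset Printing Implicit Defensive.
Import Order.TTheory GRing.Theory Num.Theory.
Local Open Scope ring_scope.

Section SymTrop.
Variables (R : realDomainType) (n : nat) (A : 'M[R]_n).

Definition is_bij (I J : {set 'I_n}) (f : {ffun 'I_n -> 'I_n}) : bool :=
  (f @: I == J) && [forall i in I, forall j in I, (f i == f j) ==> (i == j)].

(* Exponent of the symmetric variable X_{a,b} = X_{b,a} in the monomial
   prod_{i in I} X_{i, f i}. *)
Definition mono_cnt (I : {set 'I_n}) (f : {ffun 'I_n -> 'I_n}) (a b : 'I_n) : nat :=
  #|[set i in I | ((i == a) && (f i == b)) || ((i == b) && (f i == a))]|.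

Definition same_monomial (I : {set 'I_n}) (f g : {ffun 'I_n -> 'I_n}) : bool :=
  [forall a, forall b, mono_cnt I f a b == mono_cnt I g a b].

Definition bij_value (I : {set 'I_n}) (f : {ffun 'I_n -> 'I_n}) : R :=
  \sum_(i in I) A i (f i).

Definition attains_min (I J : {set 'I_n}) (f : {ffun 'I_n -> 'I_n}) : bool :=
  is_bij I J f &&
  [forall h : {ffun 'I_n -> 'I_n}, is_bij I J h ==> (bij_value I f <= bij_value I h)].

Definition sym_trop_singular (I J : {set 'I_n}) : bool :=
  [exists f : {ffun 'I_n -> 'I_n}, exists g : {ffun 'I_n -> 'I_n},
     [&& attains_min I J f, attains_min I J g & ~~ same_monomial I f g]].

Definition sym_trop_rank : nat :=
  \max_(IJ : {set 'I_n} * {set 'I_n} |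
          (#|IJ.1| == #|IJ.2|) && ~~ sym_trop_singular IJ.1 IJ.2) #|IJ.1|.

End SymTrop.

Definition border_mx (R : realDomainType) (n : nat) (A : 'M[R]_n) (M P : R)
  : 'M[R]_(n + 1) :=
  block_mx A (const_mx P) (const_mx P) (const_mx M).

(* Bordering a nonsingular submatrix of A with the last row and column of A'
   keeps it nonsingular: an optimal bijection must match the corner M with
   itself, since otherwise exchanging two of its values would replace P + P by
   M + a_ij < P + P; so the optimal monomials of the bordered submatrix are
   those of the original one times X_{n+1,n+1}.  Conversely, deleting a row u
   and the column that an optimal bijection assigns to u never makes a
   nonsingular submatrix singular (optimal bijections of the smaller matrix
   extend, and all their monomials gain the same factor), and u can be chosen
   so that what remains is a submatrix of A. *)

From mathcomp Require Import all_boot all_order all_algebra.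
From mathcomp Require Import all_classical all_reals.
From mathcomp Require Import perm.
Set Implicit Arguments. Unset Strict Implicit. Unset Printing Implicit Defensive.
Import Order.TTheory GRing.Theory Num.Theory.
Local Open Scope ring_scope.

Section Bijections.
Variable N : nat.
Implicit Types (I J : {set 'I_N}) (f g F G : {ffun 'I_N -> 'I_N}).

Lemma is_bijP I J f :
  reflect [/\ {in I, forall i, f i \in J}, {in I &, injective f} &
              forall j, j \in J -> exists2 i, i \in I & f i = j]
          (is_bij I J f).
Proof.
apply: (iffP andP) => [[/eqP <- /forall_inP f_inj]|[fIJ f_inj f_onto]]; split.
- by move=> i iI; apply: imset_f.
- move=> i j iI jI fij; have /forall_inP/(_ j jI)/implyP := f_inj i iI.
  by rewrite fij eqxx => /(_ isT)/eqP.
- by move=> j /imsetP[i iI ->]; exists i.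
- apply/eqP/setP => j; apply/imsetP/idP => [[i iI ->]|jJ]; first exact: fIJ.
  by have [i iI <-] := f_onto j jJ; exists i.
- apply/forall_inP => i iI; apply/forall_inP => j jI; apply/implyP => /eqP.
  by move/f_inj => -> //.
Qed.

Lemma eq_is_bij I J f g : {in I, f =1 g} -> is_bij I J f = is_bij I J g.
Proof.
move=> fg; wlog suff: f g fg / is_bij I J f -> is_bij I J g.
  by move=> suff; apply/idP/idP; apply: suff => // i /fg.
case/is_bijP=> fIJ f_inj f_onto; apply/is_bijP; split.
- by move=> i iI; rewrite -fg // fIJ.
- by move=> i j iI jI; rewrite -!fg //; apply: f_inj.
- by move=> j /f_onto[i iI <-]; exists i; rewrite ?fg.
Qed.

Lemma exists_is_bij I J : #|I| = #|J| -> exists f, is_bij I J f.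
Proof.
move=> cardIJ; exists [ffun x => nth x (enum J) (index x (enum I))].
have idx_lt i : i \in I -> (index i (enum I) < size (enum J))%N.
  by move=> iI; rewrite -cardE -cardIJ cardE index_mem mem_enum.
apply/is_bijP; split.
- by move=> i iI; rewrite ffunE -mem_enum mem_nth // idx_lt.
- move=> i j iI jI; rewrite !ffunE (set_nth_default i _ (idx_lt j jI)) => /eqP.
  rewrite nth_uniq ?enum_uniq ?idx_lt // => /eqP.
  by move/(congr1 (nth i (enum I))); rewrite !nth_index ?mem_enum.
- move=> j jJ; have jI : (index j (enum J) < size (enum I))%N.
    by rewrite -cardE cardIJ cardE index_mem mem_enum.
  exists (nth j (enum I) (index j (enum J))); first by rewrite -mem_enum mem_nth.
  rewrite ffunE index_uniq ?enum_uniq //.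
  by rewrite (set_nth_default j) ?index_mem ?mem_enum // nth_index // mem_enum.
Qed.

Definition ffun_upd f (u v : 'I_N) : {ffun 'I_N -> 'I_N} :=
  [ffun x => if x == u then v else f x].

Lemma is_bij_upd I J f u v : u \in I -> v \in J ->
  is_bij (I :\ u) (J :\ v) f -> is_bij I J (ffun_upd f u v).
Proof.
move=> uI vJ /is_bijP[fIJ f_inj f_onto].
have fxJ x : x \in I -> x != u -> f x \in J :\ v.
  by move=> xI xu; rewrite fIJ // in_setD1 xu.
apply/is_bijP; split.
- move=> x xI; rewrite ffunE; case: eqVneq => // xu.
  by have /setD1P[] := fxJ x xI xu.
- move=> x y xI yI; rewrite !ffunE.
  case: (eqVneq x u) => [->|xu]; case: (eqVneq y u) => [->|yu] //.
  + by move=> vfy; have := fxJ y yI yu; rewrite -vfy setD11.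
  + by move=> fxv; have := fxJ x xI xu; rewrite fxv setD11.
  + by apply: f_inj; rewrite in_setD1 ?xu ?yu.
- move=> y yJ; case: (eqVneq y v) => [->|yv]; first by exists u; rewrite ?ffunE ?eqxx.
  have [x] : exists2 x, x \in I :\ u & f x = y by apply: f_onto; rewrite in_setD1 yv.
  by case/setD1P => xu xI fxy; exists x; rewrite // ffunE (negbTE xu).
Qed.

Lemma is_bijD1 I J F u : u \in I -> is_bij I J F -> is_bij (I :\ u) (J :\ F u) F.
Proof.
move=> uI /is_bijP[FIJ F_inj F_onto]; apply/is_bijP; split.
- move=> x /setD1P[xu xI]; rewrite in_setD1 FIJ // andbT.
  by apply: contra xu => /eqP/F_inj ->.
- by move=> x y /setD1P[_ xI] /setD1P[_ yI]; apply: F_inj.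
- move=> y /setD1P[yFu yJ]; have [x xI Fxy] := F_onto y yJ.
  by exists x; rewrite // in_setD1 xI andbT; apply: contra yFu => /eqP <-; rewrite Fxy.
Qed.

Lemma is_bij_tperm I J F u x : u \in I -> x \in I ->
  is_bij I J F -> is_bij I J [ffun z => F (tperm u x z)].
Proof.
move=> uI xI /is_bijP[FIJ F_inj F_onto].
have tpermI z : z \in I -> tperm u x z \in I by case: tpermP.
apply/is_bijP; split.
- by move=> z zI; rewrite ffunE FIJ ?tpermI.
- move=> y z yI zI; rewrite !ffunE => /F_inj; rewrite !tpermI // => /(_ isT isT).
  exact: perm_inj.
- move=> y /F_onto[z zI <-]; exists (tperm u x z); first exact: tpermI.
  by rewrite ffunE tpermK.
Qed.

Lemma is_bij_mem I J f i : is_bij I J f -> i \in I -> f i \in J.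
Proof. by case/is_bijP => fIJ _ _; apply: fIJ. Qed.

Lemma ffun_upd_setD1 I f u v : {in I :\ u, ffun_upd f u v =1 f}.
Proof. by move=> x /setD1P[xu _]; rewrite ffunE (negbTE xu). Qed.

Lemma eq_mono_cnt I f g a b : {in I, f =1 g} -> mono_cnt I f a b = mono_cnt I g a b.
Proof.
by move=> fg; apply: eq_card => x; rewrite !inE; case: (boolP (x \in I)) => // /fg ->.
Qed.

Lemma eq_same_monomial I f1 f2 g1 g2 : {in I, f1 =1 f2} -> {in I, g1 =1 g2} ->
  same_monomial I f1 g1 = same_monomial I f2 g2.
Proof.
move=> f12 g12; apply: eq_forallb => a; apply: eq_forallb => b.
by rewrite (eq_mono_cnt a b f12) (eq_mono_cnt a b g12).
Qed.

Lemma mono_cntC I f a b : mono_cnt I f a b = mono_cnt I f b a.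
Proof. by apply: eq_card => x; rewrite !inE orbC. Qed.

Lemma mono_cntD1 I F u a b : u \in I -> mono_cnt I F a b =
  ((((u == a) && (F u == b)) || ((u == b) && (F u == a))) + mono_cnt (I :\ u) F a b)%N.
Proof.
move=> uI; rewrite /mono_cnt (cardsD1 u) inE uI; congr (_ + _)%N.
by apply: eq_card => x; rewrite !inE andbA.
Qed.

Lemma same_monomialD1 I F G u : u \in I -> F u = G u ->
  same_monomial I F G = same_monomial (I :\ u) F G.
Proof.
move=> uI FGu; apply: eq_forallb => a; apply: eq_forallb => b.
by rewrite !(mono_cntD1 _ _ _ uI) FGu eqn_add2l.
Qed.

End Bijections.

Section Singular.
Variables (R : realDomainType) (N : nat) (B : 'M[R]_N).
Implicit Types (I J : {set 'I_N}) (f g h F G : {ffun 'I_N -> 'I_N}).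

Lemma attains_minP I J F :
  reflect (is_bij I J F /\ forall h, is_bij I J h -> bij_value B I F <= bij_value B I h)
          (attains_min B I J F).
Proof.
apply: (iffP andP) => [[-> /forallP F_min]|[-> F_min]]; split=> //.
- by move=> h; apply/implyP.
- by apply/forallP => h; apply/implyP/F_min.
Qed.

Lemma eq_bij_value I f g : {in I, f =1 g} -> bij_value B I f = bij_value B I g.
Proof. by move=> fg; apply: eq_bigr => i /fg ->. Qed.

Lemma eq_attains_min I J F G : {in I, F =1 G} ->
  attains_min B I J F = attains_min B I J G.
Proof.
by move=> FG; rewrite /attains_min (eq_is_bij _ FG) (eq_bij_value FG).
Qed.

Lemma bij_valueD1 I F u : u \in I ->
  bij_value B I F = B u (F u) + bij_value B (I :\ u) F.
Proof. exact: big_setD1. Qed.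

Lemma exists_attains_min I J : #|I| = #|J| -> exists F, attains_min B I J F.
Proof.
case/exists_is_bij => f0 f0_bij.
have [F F_bij F_min] := arg_minP (bij_value B I) (P := [pred h | is_bij I J h]) f0_bij.
by exists F; apply/attains_minP.
Qed.

Lemma attains_minD1 I J F u : u \in I -> attains_min B I J F ->
  attains_min B (I :\ u) (J :\ F u) F.
Proof.
move=> uI /attains_minP[F_bij F_min]; apply/attains_minP; split=> [|h h_bij].
  exact: is_bijD1.
have /F_min := is_bij_upd uI (is_bij_mem F_bij uI) h_bij.
rewrite (bij_valueD1 F uI) (bij_valueD1 _ uI) ffunE eqxx lerD2l.
by rewrite (eq_bij_value (ffun_upd_setD1 h (F u))).
Qed.

Lemma attains_min_upd I J F f u : u \in I -> attains_min B I J F ->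
  attains_min B (I :\ u) (J :\ F u) f -> attains_min B I J (ffun_upd f u (F u)).
Proof.
move=> uI /attains_minP[F_bij F_min] /attains_minP[f_bij f_min].
apply/attains_minP; split=> [|h h_bij]; first exact: is_bij_upd (is_bij_mem F_bij uI) _.
apply: le_trans (F_min h h_bij).
rewrite (bij_valueD1 _ uI) (bij_valueD1 F uI) ffunE eqxx lerD2l.
by rewrite (eq_bij_value (ffun_upd_setD1 f (F u))) f_min // is_bijD1.
Qed.

Lemma attains_min_exchange I J F u x : u \in I -> x \in I -> attains_min B I J F ->
  B u (F u) + B x (F x) <= B u (F x) + B x (F u).
Proof.
move=> uI xI /attains_minP[F_bij F_min].
have [<-|ux] := eqVneq u x; first by [].
have xIu : x \in I :\ u by rewrite in_setD1 eq_sym ux.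
have value_split H :
    bij_value B I H = B u (H u) + B x (H x) + bij_value B (I :\ u :\ x) H.
  by rewrite (bij_valueD1 _ uI) (bij_valueD1 _ xIu) addrA.
pose G := [ffun z => F (tperm u x z)].
have GF : {in I :\ u :\ x, G =1 F}.
  by move=> z; rewrite !in_setD1 => /and3P[zx zu _]; rewrite ffunE tpermD // eq_sym.
have := F_min G (is_bij_tperm uI xI F_bij).
by rewrite !value_split (eq_bij_value GF) !ffunE tpermL tpermR lerD2r.
Qed.

Lemma sym_trop_singularD1 I J F u : u \in I -> attains_min B I J F ->
  sym_trop_singular B (I :\ u) (J :\ F u) -> sym_trop_singular B I J.
Proof.
move=> uI F_min /existsP[f /existsP[g /and3P[f_min g_min fg]]].
apply/existsP; exists (ffun_upd f u (F u)); apply/existsP; exists (ffun_upd g u (F u)).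
rewrite !attains_min_upd // (same_monomialD1 uI) ?ffunE ?eqxx //.
by rewrite (eq_same_monomial (ffun_upd_setD1 f (F u)) (ffun_upd_setD1 g (F u))).
Qed.

Lemma sym_trop_singularD1_fixed I J u v : u \in I ->
  (forall F, attains_min B I J F -> F u = v) ->
  sym_trop_singular B I J -> sym_trop_singular B (I :\ u) (J :\ v).
Proof.
move=> uI Fuv /existsP[F /existsP[G /and3P[F_min G_min FG]]].
apply/existsP; exists F; apply/existsP; exists G.
have := attains_minD1 uI F_min; have := attains_minD1 uI G_min.
rewrite !Fuv // => -> ->.
by rewrite -same_monomialD1 // !Fuv.
Qed.

Lemma sym_trop_singular_set0 : ~~ sym_trop_singular B finset.set0 finset.set0.
Proof.
apply/existsP => -[f /existsP[g /and3P[_ _ /negP]]]; apply.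
by apply/forallP => a; apply/forallP => b; apply/eqP/eq_card => x; rewrite !inE.
Qed.

Lemma sym_trop_rank_ge I J : #|I| = #|J| -> ~~ sym_trop_singular B I J ->
  (#|I| <= sym_trop_rank B)%N.
Proof.
move=> cardIJ nsing.
by rewrite /sym_trop_rank (bigD1 (I, J)) /= ?cardIJ ?eqxx ?leq_maxl.
Qed.

Lemma sym_trop_rank_leP k :
  reflect (forall I J, #|I| = #|J| -> ~~ sym_trop_singular B I J -> (#|I| <= k)%N)
          (sym_trop_rank B <= k)%N.
Proof.
apply: (iffP (bigop.bigmax_leqP _ _ _)) => le_k.
  by move=> I J cardIJ nsing; apply: (le_k (I, J)); rewrite /= cardIJ eqxx.
by move=> [I J] /andP[/eqP]; apply: le_k.
Qed.

End Singular.

Section Relabel.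
Variables (R : realDomainType) (n N : nat) (A : 'M[R]_n) (B : 'M[R]_N).
Variables (e : 'I_n -> 'I_N) (d : 'I_N -> option 'I_n).
Hypotheses (eK : pcancel e d) (BA : forall i j, B (e i) (e j) = A i j).
Implicit Types (I J : {set 'I_n}) (f g h : {ffun 'I_n -> 'I_n}).
Implicit Types (F G H : {ffun 'I_N -> 'I_N}).

Definition push_ffun f : {ffun 'I_N -> 'I_N} :=
  [ffun x => if d x is Some i then e (f i) else x].

Definition pull_ffun F : {ffun 'I_n -> 'I_n} := [ffun i => odflt i (d (F (e i)))].

Let e_inj : injective e := pcan_inj eK.

Lemma push_ffunE f i : push_ffun f (e i) = e (f i).
Proof. by rewrite ffunE eK. Qed.

Lemma pull_ffunE F i j : F (e i) = e j -> pull_ffun F i = j.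
Proof. by rewrite ffunE => ->; rewrite eK. Qed.

Lemma is_bij_push I J f : is_bij (e @: I) (e @: J) (push_ffun f) = is_bij I J f.
Proof.
apply/is_bijP/is_bijP => -[fIJ f_inj f_onto]; split.
- by move=> i iI; rewrite -(mem_imset _ _ e_inj) -push_ffunE fIJ ?imset_f.
- move=> i j iI jI fij; apply: e_inj; apply: f_inj; rewrite ?imset_f //.
  by rewrite !push_ffunE fij.
- move=> j jJ; have [_ /imsetP[i iI ->]] := f_onto (e j) (imset_f e jJ).
  by rewrite push_ffunE => /e_inj fij; exists i.
- by move=> _ /imsetP[i iI ->]; rewrite push_ffunE imset_f ?fIJ.
- move=> _ _ /imsetP[i iI ->] /imsetP[j jI ->].
  by rewrite !push_ffunE => /e_inj/f_inj ->.
- move=> _ /imsetP[j jJ ->]; have [i iI <-] := f_onto j jJ.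
  by exists (e i); rewrite ?imset_f ?push_ffunE.
Qed.

Lemma bij_value_push I f : bij_value B (e @: I) (push_ffun f) = bij_value A I f.
Proof.
rewrite /bij_value big_imset /=; last by move=> i j _ _; apply: e_inj.
by apply: eq_bigr => i _; rewrite push_ffunE BA.
Qed.

Lemma mono_cnt_push I f a b :
  mono_cnt (e @: I) (push_ffun f) (e a) (e b) = mono_cnt I f a b.
Proof.
rewrite /mono_cnt -(card_imset _ e_inj); apply: eq_card => x.
rewrite !inE; apply/andP/imsetP => [[/imsetP[i iI ->]]|[i]].
  by rewrite push_ffunE !(inj_eq e_inj) => Pi; exists i; rewrite // inE iI.
by rewrite inE => /andP[iI Pi] ->; rewrite imset_f // push_ffunE !(inj_eq e_inj).
Qed.

Lemma mono_cnt_push_out I f a b : a \notin codom e ->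
  mono_cnt (e @: I) (push_ffun f) a b = 0%N.
Proof.
move=> a_out; apply: eq_card0 => x; rewrite !inE.
apply/negP => /andP[/imsetP[i _ ->]]; rewrite push_ffunE.
by case/orP => /andP[/eqP ea /eqP eb]; case/codomP: a_out; [exists i | exists (f i)].
Qed.

Lemma same_monomial_push I f g :
  same_monomial (e @: I) (push_ffun f) (push_ffun g) = same_monomial I f g.
Proof.
apply/forallP/forallP => fg a; apply/forallP => b.
  by have /forallP/(_ (e b)) := fg (e a); rewrite !mono_cnt_push.
have [a_in|a_out] := boolP (a \in codom e); last by rewrite !mono_cnt_push_out.
have [b_in|b_out] := boolP (b \in codom e); last first.
  by rewrite ![mono_cnt _ _ a b]mono_cntC !mono_cnt_push_out.
case/codomP: a_in => i ->; case/codomP: b_in => j ->.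
by rewrite !mono_cnt_push; have /forallP := fg i.
Qed.

Lemma push_pull_ffun I J F : is_bij (e @: I) (e @: J) F ->
  {in e @: I, push_ffun (pull_ffun F) =1 F}.
Proof.
move=> F_bij _ /imsetP[i iI ->].
have /imsetP[j _ Fij] := is_bij_mem F_bij (imset_f e iI).
by rewrite push_ffunE Fij (pull_ffunE Fij).
Qed.

Lemma is_bij_pull I J F : is_bij (e @: I) (e @: J) F -> is_bij I J (pull_ffun F).
Proof. by move=> F_bij; rewrite -is_bij_push (eq_is_bij _ (push_pull_ffun F_bij)). Qed.

Lemma attains_min_push I J f :
  attains_min B (e @: I) (e @: J) (push_ffun f) = attains_min A I J f.
Proof.
apply/attains_minP/attains_minP; rewrite is_bij_push => -[f_bij f_min]; split=> // H.
  by move=> h_bij; rewrite -!bij_value_push f_min ?is_bij_push.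
move=> H_bij; rewrite -(eq_bij_value _ (push_pull_ffun H_bij)) !bij_value_push.
exact/f_min/is_bij_pull.
Qed.

Lemma sym_trop_singular_push I J :
  sym_trop_singular B (e @: I) (e @: J) = sym_trop_singular A I J.
Proof.
apply/existsP/existsP => -[f /existsP[g /and3P[f_min g_min fg]]].
  have /attains_minP[f_bij _] := f_min; have /attains_minP[g_bij _] := g_min.
  exists (pull_ffun f); apply/existsP; exists (pull_ffun g).
  rewrite -!attains_min_push (eq_attains_min _ _ (push_pull_ffun f_bij)).
  rewrite (eq_attains_min _ _ (push_pull_ffun g_bij)) f_min g_min /=.
  rewrite -same_monomial_push.
  by rewrite (eq_same_monomial (push_pull_ffun f_bij) (push_pull_ffun g_bij)).
exists (push_ffun f); apply/existsP; exists (push_ffun g).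
by rewrite !attains_min_push same_monomial_push f_min g_min.
Qed.

End Relabel.

Section Border.
Variables (R : realDomainType) (n : nat) (A : 'M[R]_n) (M P : R).
Hypotheses (M_lt : forall i j, M < A i j) (lt_P : forall i j, A i j < P).
Local Notation B := (border_mx A M P).
Local Notation top := (rshift n (ord0 : 'I_1)).
Local Notation emb := (@lshift n 1).
Implicit Types (I J : {set 'I_(n + 1)}) (F : {ffun 'I_(n + 1) -> 'I_(n + 1)}).

Definition unlshift (x : 'I_(n + 1)) : option 'I_n :=
  if fintype.split x is inl i then Some i else None.

Lemma lshiftK : pcancel emb unlshift.
Proof. by move=> i; rewrite /unlshift (unsplitK (inl i)). Qed.

Lemma border_mx_lshift i j : B (emb i) (emb j) = A i j.
Proof. exact: block_mxEul. Qed.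

Lemma border_mx_lshift_top i : B (emb i) top = P.
Proof. by rewrite /border_mx block_mxEur mxE. Qed.

Lemma border_mx_top_lshift j : B top (emb j) = P.
Proof. by rewrite /border_mx block_mxEdl mxE. Qed.

Lemma border_mx_top_top : B top top = M.
Proof. by rewrite /border_mx block_mxEdr mxE. Qed.

Lemma lshift_neq_top i : emb i != top.
Proof. by rewrite -val_eqE /= addn0 neq_ltn ltn_ord. Qed.

Lemma neq_top_lshift x : x != top -> exists i, x = emb i.
Proof.
rewrite -(splitK x); case: (fintype.split x) => [i _|k]; first by exists i.
by rewrite (ord1 k) eqxx.
Qed.

Lemma top_notin_lshift (S : {set 'I_n}) : top \notin emb @: S.
Proof. by apply/imsetP => -[i _ /eqP]; rewrite eq_sym (negbTE (lshift_neq_top i)). Qed.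

Lemma lshift_preimK (S : {set 'I_(n + 1)}) : top \notin S -> emb @: (emb @^-1: S) = S.
Proof.
move=> tS; apply/setP => x; have [->|/neq_top_lshift[i ->]] := eqVneq x top.
  by rewrite (negbTE tS) (negbTE (top_notin_lshift _)).
by rewrite (mem_imset _ _ (pcan_inj lshiftK)) inE.
Qed.

Lemma border_attains_min_top I J F : top \in I -> top \in J ->
  attains_min B I J F -> F top = top.
Proof.
move=> tI tJ F_min; apply/eqP/negPn/negP => Ft.
have /attains_minP[/is_bijP[_ _ F_onto] _] := F_min.
have [x xI Fx] := F_onto top tJ.
have xt : x != top by apply: contraNneq Ft => xt; rewrite -{1}xt Fx.
have [[i xi] [j Fj]] := (neq_top_lshift xt, neq_top_lshift Ft).
have := attains_min_exchange tI xI F_min.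
rewrite Fx Fj xi border_mx_top_lshift border_mx_lshift_top border_mx_top_top.
by rewrite border_mx_lshift leNgt ltrD // (lt_trans (M_lt i j)).
Qed.

Lemma border_pivot I J F : attains_min B I J F -> (top \in I) || (top \in J) ->
  exists2 u, u \in I & (top \notin I :\ u) && (top \notin J :\ F u).
Proof.
move=> F_min; have /attains_minP[/is_bijP[_ _ F_onto] _] := F_min.
have [tI _|tI /= tJ] := boolP (top \in I).
  exists top; rewrite // !in_setD1 eqxx /=.
  have [tJ|_] := boolP (top \in J); last by rewrite andbF.
  by rewrite (border_attains_min_top tI tJ F_min) eqxx.
have [x xI Fx] := F_onto top tJ.
by exists x; rewrite // Fx !in_setD1 (negbTE tI) eqxx andbF.
Qed.

Lemma sym_trop_singular_lshift (I J : {set 'I_n}) :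
  sym_trop_singular B (emb @: I) (emb @: J) = sym_trop_singular A I J.
Proof. exact: sym_trop_singular_push lshiftK border_mx_lshift I J. Qed.

Lemma border_nonsingular (I J : {set 'I_n}) : ~~ sym_trop_singular A I J ->
  ~~ sym_trop_singular B (top |: emb @: I) (top |: emb @: J).
Proof.
apply: contra => sing.
have F_top F : attains_min B (top |: emb @: I) (top |: emb @: J) F -> F top = top.
  by apply: border_attains_min_top; apply: setU11.
have := sym_trop_singularD1_fixed (setU11 _ _) F_top sing.
by rewrite !setU1K ?top_notin_lshift // sym_trop_singular_lshift.
Qed.

Lemma border_card_le_rank I J : #|I| = #|J| -> ~~ sym_trop_singular B I J ->
  (#|I| <= (sym_trop_rank A).+1)%N.
Proof.
have rank_ge I1 J1 : top \notin I1 -> top \notin J1 -> #|I1| = #|J1| ->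
    ~~ sym_trop_singular B I1 J1 -> (#|I1| <= sym_trop_rank A)%N.
  move=> /lshift_preimK <- /lshift_preimK <-.
  rewrite sym_trop_singular_lshift !card_imset //; try exact: pcan_inj lshiftK.
  exact: sym_trop_rank_ge.
move=> cardIJ nsing; have [tIJ|] := boolP ((top \in I) || (top \in J)); last first.
  by rewrite negb_or => /andP[tI tJ]; rewrite ltnW // ltnS (rank_ge I J).
have [F F_min] := exists_attains_min B cardIJ.
have [u uI /andP[tIu tJu]] := border_pivot F_min tIJ.
have FuJ : F u \in J by apply: is_bij_mem uI; case/attains_minP: F_min.
rewrite (cardsD1 u) uI ltnS (rank_ge _ (J :\ F u)) //.
  by move: cardIJ; rewrite (cardsD1 u I) (cardsD1 (F u) J) uI FuJ => /addnI.
exact: contra (sym_trop_singularD1 uI F_min) nsing.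
Qed.

Lemma border_rank_ge : ((sym_trop_rank A).+1 <= sym_trop_rank B)%N.
Proof.
have succ_le (I J : {set 'I_n}) : #|I| = #|J| -> ~~ sym_trop_singular A I J ->
    (#|I|.+1 <= sym_trop_rank B)%N.
  have card_top (S : {set 'I_n}) : #|top |: emb @: S| = #|S|.+1.
    by rewrite cardsU1 top_notin_lshift card_imset //; apply: pcan_inj lshiftK.
  move=> cardIJ /border_nonsingular nsing; rewrite -card_top.
  by apply: sym_trop_rank_ge nsing; rewrite !card_top cardIJ.
have := succ_le _ _ erefl (sym_trop_singular_set0 A); rewrite cards0 => rank_gt0.
rewrite -(ltn_predK rank_gt0) ltnS; apply/sym_trop_rank_leP => I J cardIJ nsing.
by rewrite -ltnS (ltn_predK rank_gt0) (succ_le I J).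
Qed.

End Border.

Unset Implicit Arguments.

Theorem lemma7 (R : realType) (n : nat) (A : 'M[R]_n) (M P : R) :
  A^T = A ->
  (forall i j, M < A i j) ->
  (forall i j, A i j < P) ->
  sym_trop_rank (border_mx A M P) = (sym_trop_rank A).+1.
Proof.
move=> _ M_lt lt_P; apply/eqP; rewrite eqn_leq border_rank_ge // andbT.
by apply/sym_trop_rank_leP => I J; apply: border_card_le_rank.
Qed.
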